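(* Let $p$ be an odd prime and let $G$ be the non-abelian group of order $p^3$ and exponent $p$. Let $U = g_1 \cdot \dotsc \cdot g_m$ be a sequence over $G$ of length $m \geq p+1$ that has central product. If $U$ contains an EGZ subsequence, then there exists a permutation $\sigma$ of $\{1,\dots,m\}$ such that $g_{\sigma(1)} g_{\sigma(2)} \cdots g_{\sigma(m)} = 1$. In particular, every EGZ sequence over $G$ contains a non-empty product-one subsequence.
   Context: $G = \langle x, y : x^p = y^p = 1,\ [y,x] \text{ central}\rangle$ is the Heisenberg group of order $p^3$ and exponent $p$; here $Z(G) = [G,G]$ has order $p$. A sequence over $G$ is a finite unordered list (multiset) $g_1 \cdot \dotsc \cdot g_\ell$ of elements of $G$; its length is $\ell$; a subsequence is a sub-multiset. A non-empty sequence $T$ is product-one if, for some ordering of its terms, the product equals $1$. A sequence $T = g_1\cdot\dotsc\cdot g_\ell$ has central product if $g_1 g_2\cdots g_\ell \in Z(G)$ (since $[G,G]=Z(G)$, this does not depend on the ordering). A sequence $T$ over $G$ is an EGZ sequence if $T$ has central product and $T$ contains a subsequence consisting of $p$ terms which can be labelled $h_1,\dots,h_{p-1},h_p$ so that $h_p$ does not commute with the product $h_\alpha h_{\alpha+1}\cdots h_\beta$ for any $1 \le \alpha \le \beta \le p-1$. *)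

From mathcomp Require Import all_boot all_fingroup all_solvable.
Set Implicit Arguments. Unset Strict Implicit. Unset Printing Implicit Defensive.
Import GroupScope.

(* A sequence over a group is modelled as a [seq gT] (its multiset of terms);
   orderings of it are sequences [t] with [perm_eq s t]. *)

Definition seq_prod (gT : finGroupType) (s : seq gT) : gT := \prod_(x <- s) x.

Definition seq_over (gT : finGroupType) (G : {set gT}) (s : seq gT) : Prop :=
  all (mem G) s.

Definition sub_ms (gT : finGroupType) (T U : seq gT) : Prop :=
  exists R : seq gT, perm_eq U (T ++ R).

(* s has central product (independent of ordering since [G,G] = Z(G)) *)
Definition central_prod (gT : finGroupType) (G : {set gT}) (s : seq gT) : Prop :=
  seq_prod s \in 'Z(G).

Definition product_one (gT : finGroupType) (s : seq gT) : Prop :=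
  s <> [::] /\ exists t : seq gT, perm_eq s t /\ seq_prod t = 1.

(* EGZ sequence: central product and a subsequence h_1 ... h_p of p terms
   such that h_p does not commute with h_a h_{a+1} ... h_b for any
   1 <= a <= b <= p-1.  With 0-based lists, h_a..h_b = drop (a-1) (take b h)
   and h_p = nth 1 h (p-1). *)
Definition EGZ (gT : finGroupType) (G : {set gT}) (p : nat) (T : seq gT) : Prop :=
  central_prod G T /\
  exists h : seq gT,
    size h = p /\ sub_ms h T /\
    forall a b : nat, 1 <= a -> a <= b -> b <= p.-1 ->
      ~ commute (nth 1 h p.-1) (seq_prod (drop a.-1 (take b h))).

From mathcomp Require Import all_boot all_fingroup all_solvable.
Set Implicit Arguments.
Unset Strict Implicit.
Unset Printing Implicit Defensive.
Import GroupScope.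

(* In a group of nilpotency class 2 reordering a sequence changes its product
   only by a central factor, so one may arrange U as R h_1 ... h_(p-1) h_p with
   central product Q.  Moving h_p to the left of the suffix h_(k+1) ... h_(p-1)
   multiplies Q by the commutator of h_p with that suffix.  The EGZ condition
   makes these p commutators pairwise distinct, so they fill the centre, which
   has order p; one of them is therefore Q^-1. *)

Lemma seq_prod_cat (gT : finGroupType) (s t : seq gT) :
  seq_prod (s ++ t) = seq_prod s * seq_prod t.
Proof. by rewrite /seq_prod big_cat. Qed.

Lemma seq_prod_insert (gT : finGroupType) (a b : seq gT) (x : gT) :
  seq_prod (a ++ x :: b) = seq_prod (a ++ rcons b x) * [~ x, seq_prod b].
Proof.
rewrite -cats1 /seq_prod !big_cat big_cons big_seq1 /=.
by rewrite (commgC x (\prod_(y <- b) y)) !mulgA.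
Qed.

Lemma commg_suffix_prod_inj (gT : finGroupType) (x : gT) (s : seq gT) :
  (forall j k, j < k <= size s -> ~ commute x (seq_prod (drop j (take k s)))) ->
  injective (fun k : 'I_(size s).+1 => [~ x, seq_prod (drop k s)]).
Proof.
move=> ncx.
have neq_lt j k : j < k <= size s ->
    [~ x, seq_prod (drop j s)] != [~ x, seq_prod (drop k s)].
  case/andP=> lt_jk le_ks.
  have -> : drop j s = drop j (take k s) ++ drop k s.
    by rewrite -{1}(cat_take_drop k s) drop_cat size_takel // lt_jk.
  rewrite seq_prod_cat commgMJ -[X in _ != X]mulg1 (inj_eq (mulgI _)) conjg_eq1.
  apply: contra_notN (ncx j k _); first by move/commgP.
  by rewrite lt_jk.
move=> j k /= Ejk; case: (ltngtP j k) => [lt_jk|lt_kj|/val_inj //].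
  by move: (neq_lt j k); rewrite lt_jk -ltnS ltn_ord Ejk eqxx => /(_ isT).
by move: (neq_lt k j); rewrite lt_kj -ltnS ltn_ord Ejk eqxx => /(_ isT).
Qed.

Lemma sub_ms_refl (gT : finGroupType) (s : seq gT) : sub_ms s s.
Proof. by exists [::]; rewrite cats0. Qed.

Lemma sub_ms_trans (gT : finGroupType) (s t u : seq gT) :
  sub_ms s t -> sub_ms t u -> sub_ms s u.
Proof.
move=> [R1 st] [R2 tu]; exists (R1 ++ R2).
by rewrite (perm_trans tu) // catA perm_cat2r.
Qed.

Section ClassTwo.

Variables (gT : finGroupType) (G : {group gT}).
Hypothesis sGG_Z : [~: G, G] \subset 'Z(G).

Lemma commg_center (x y : gT) : x \in G -> y \in G -> [~ x, y] \in 'Z(G).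
Proof. by move=> xG yG; apply: (subsetP sGG_Z); apply: mem_commg. Qed.

Lemma seq_prod_over (s : seq gT) : seq_over G s -> seq_prod s \in G.
Proof. by move/allP=> sG; rewrite /seq_prod big_seq group_prod. Qed.

Lemma seq_prod_perm_center (s t : seq gT) : seq_over G s -> perm_eq s t ->
  exists2 z, z \in 'Z(G) & seq_prod t = seq_prod s * z.
Proof.
elim: s t => [|x s IHs] t /=.
  by move=> _; rewrite perm_sym => /perm_nilP ->; exists 1; rewrite ?group1 ?mulg1.
case/andP=> xG sG st.
have x_t : x \in t by rewrite -(perm_mem st) mem_head.
case/splitPr: x_t st => t1 t2 st.
have s_t12 : perm_eq s (t1 ++ t2).
  by rewrite -(perm_cons x) (perm_trans st) // (perm_catCA t1 [:: x] t2).
have /andP[t1G t2G] : all (mem G) t1 && all (mem G) t2.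
  by rewrite -all_cat -(perm_all _ s_t12).
have [z zZ Ez] := IHs _ sG s_t12.
have cZ := commg_center (seq_prod_over t1G) xG.
exists (z * [~ seq_prod t1, x]); first by rewrite groupM.
have -> : seq_prod (x :: s) = x * seq_prod s by rewrite /seq_prod big_cons.
rewrite seq_prod_cat /seq_prod big_cons -/(seq_prod t1) -/(seq_prod t2) mulgA.
rewrite (commgC (seq_prod t1) x) -(mulgA _ [~ _, _]).
case/centerP: cZ => _ /(_ _ (seq_prod_over t2G)) ->.
by rewrite !mulgA -(mulgA x) -seq_prod_cat Ez !mulgA.
Qed.

Lemma center_insert_prod1 (R s : seq gT) (x : gT) :
  #|'Z(G)| <= (size s).+1 -> x \in G -> seq_over G s ->
  seq_prod (R ++ rcons s x) \in 'Z(G) ->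
  (forall j k, j < k <= size s -> ~ commute x (seq_prod (drop j (take k s)))) ->
  exists k, seq_prod (R ++ take k s ++ x :: drop k s) = 1.
Proof.
move=> oZ xG sG QZ ncx.
pose f (k : 'I_(size s).+1) := [~ x, seq_prod (drop k s)].
have f_onto : f @: [set: 'I_(size s).+1] = 'Z(G).
  apply/eqP; rewrite eqEcard card_imset; last exact: commg_suffix_prod_inj.
  rewrite cardsT card_ord oZ andbT; apply/subsetP=> _ /imsetP[k _ ->].
  apply: commg_center => //; apply: seq_prod_over.
  by apply/allP=> y /mem_drop; apply: (allP sG).
have : (seq_prod (R ++ rcons s x))^-1 \in f @: [set: _] by rewrite f_onto groupV.
case/imsetP=> k _ Ek; exists k.
rewrite catA seq_prod_insert -catA -rcons_cat cat_take_drop -/(f k) -Ek.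
exact: mulgV.
Qed.

Lemma EGZ_sub_rearrange_prod1 (p : nat) (U T : seq gT) :
  #|'Z(G)| <= p -> seq_over G U -> central_prod G U -> sub_ms T U -> EGZ G p T ->
  exists t, perm_eq U t /\ seq_prod t = 1.
Proof.
move=> oZ UG UZ TU [_ [h [size_h [hT ncx]]]].
have p_gt0 : 0 < p := leq_trans (cardG_gt0 _) oZ.
have [R U_hR] := sub_ms_trans hT TU.
set x := nth 1 h p.-1; set s := take p.-1 h.
have size_s : size s = p.-1 by rewrite size_takel // size_h leq_pred.
have Eh : h = rcons s x.
  rewrite /s /x -take_nth; last by rewrite size_h prednK.
  by rewrite prednK // take_oversize // size_h.
have U_Rsx : perm_eq U (R ++ rcons s x) by rewrite -Eh (perm_trans U_hR) // perm_catC.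
have : all (mem G) (R ++ rcons s x) by rewrite -(perm_all _ U_Rsx).
rewrite all_cat all_rcons => /and3P[_ xG sG].
have [z zZ Ez] := seq_prod_perm_center UG U_Rsx.
have [k Ek] : exists k, seq_prod (R ++ take k s ++ x :: drop k s) = 1.
  apply: center_insert_prod1 => //; first by rewrite size_s prednK.
    by rewrite Ez groupM.
  move=> j k /andP[lt_jk le_k]; rewrite /s take_takel; last by rewrite -size_s.
  by apply: (ncx j.+1 k); rewrite // -size_s.
exists (R ++ take k s ++ x :: drop k s); split=> //.
apply: (perm_trans U_Rsx); rewrite perm_cat2l -{1}(cat_take_drop k s) rcons_cat.
by rewrite perm_cat2l perm_rcons.
Qed.

End ClassTwo.

Theorem theorem1p3 (gT : finGroupType) (G : {group gT}) (p : nat) :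
  prime p -> odd p -> #|G| = (p ^ 3)%N -> ~~ abelian G -> exponent G = p ->
  (forall U : seq gT, seq_over G U -> p < size U -> central_prod G U ->
     (exists T : seq gT, sub_ms T U /\ EGZ G p T) ->
     exists t : seq gT, perm_eq U t /\ seq_prod t = 1)
  /\
  (forall T : seq gT, seq_over G T -> EGZ G p T ->
     exists S : seq gT, sub_ms S T /\ product_one S).
Proof.
move=> p_pr _ oG ncG _.
have pG : p.-group G by rewrite /pgroup oG pnatX pnat_id.
have esG : extraspecial G.
  by apply: (p3group_extraspecial pG ncG); rewrite oG pfactorK.
have oZ : #|'Z(G)| <= p by rewrite (card_center_extraspecial pG esG).
have sGG_Z : [~: G, G] \subset 'Z(G) by case: esG => [[_ <-] _]; rewrite derg1.
split=> [U UG _ UZ [T [TU EGZ_T]] | T TG EGZ_T].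
  exact: EGZ_sub_rearrange_prod1 oZ UG UZ TU EGZ_T.
exists T; split; first exact: sub_ms_refl.
split; last exact: EGZ_sub_rearrange_prod1 oZ TG EGZ_T.1 (sub_ms_refl T) EGZ_T.
case: EGZ_T => _ [h [size_h [[R hT] _]]] T0.
have : p <= size T by rewrite (perm_size hT) size_cat size_h leq_addr.
by rewrite T0 leqNgt prime_gt0.
Qed.
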